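(* Consider the following single-relay network model. Let $q$ be a prime power, $K\ge1$, $N_{\mathrm S}\ge K$, $N_{\mathrm R}\ge1$. A source S draws $N_{\mathrm S}$ coefficient vectors i.i.d. uniformly from $\mathbb{F}_q^K$ and broadcasts one packet per vector; each packet is erased on the link S$\to$D with probability $\epsilon_{\mathrm{SD}}$ and on the link S$\to$R with probability $\epsilon_{\mathrm{SR}}$, all erasures independent and independent of the coefficients. The relay R, having received $m_1$ packets with coefficient matrix $\mathbf{C}_{\mathrm S\to\mathrm R}\in\mathbb{F}_q^{m_1\times K}$, draws $\mathbf{G}\in\mathbb{F}_q^{N_{\mathrm R}\times m_1}$ with i.i.d. uniform entries and transmits the $N_{\mathrm R}$ rows of $\mathbf{G}\mathbf{C}_{\mathrm S\to\mathrm R}$ to D, each independently erased with probability $\epsilon_{\mathrm{RD}}$. D stacks all coefficient vectors received into $\mathbf{C}_{\mathrm D}$; decoding succeeds iff $\operatorname{rank}(\mathbf{C}_{\mathrm D})=K$, and $P^{(1)}_{\mathrm R}$ denotes its probability. Then $$P^{(1)}_{\mathrm R}=\sum_{(m,m_{\mathrm D},m_{\mathrm{RD}})}\alpha(m,m_{\mathrm D},m_{\mathrm{RD}})\sum_{m'}\mathcal{B}(m',N_{\mathrm R},\epsilon_{\mathrm{RD}})\;\mathbb{P}^{(2)}\big(m'+m_{\mathrm D},\,m-m_{\mathrm{RD}}+m_{\mathrm D},\,m_{\mathrm D};K\big),$$ where $$\alpha(m,m_{\mathrm D},m_{\mathrm{RD}})=\binom{N_{\mathrm S}}{m_{\mathrm{RD}}}\binom{N_{\mathrm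 S}-m_{\mathrm{RD}}}{m-m_{\mathrm{RD}}}\binom{N_{\mathrm S}-m}{m_{\mathrm D}-m_{\mathrm{RD}}}(1-\epsilon_{\mathrm{SR}})^{m}\epsilon_{\mathrm{SR}}^{\,N_{\mathrm S}-m}(1-\epsilon_{\mathrm{SD}})^{m_{\mathrm D}}\epsilon_{\mathrm{SD}}^{\,N_{\mathrm S}-m_{\mathrm D}},$$ $\mathcal{B}(k,N,\epsilon)=\binom{N}{k}(1-\epsilon)^k\epsilon^{N-k}$, the sums range over integers with $m+m_{\mathrm D}\ge K$, $m,m_{\mathrm D}\le N_{\mathrm S}$, $\max(0,m+m_{\mathrm D}-N_{\mathrm S})\le m_{\mathrm{RD}}\le\min(m,m_{\mathrm D})$, and $\max(0,K-m_{\mathrm D})\le m'\le N_{\mathrm R}$; and $\mathbb{P}^{(2)}(m_1,m_2,m_{12};K)=\sum_{i=\max(0,K-m_1+m_{12},K-m_2+m_{12})}^{\min(m_{12},K)}\mathbb{P}_i(m_{12},K)\,\mathbb{P}(m_1-m_{12},K-i)\,\mathbb{P}(m_2-m_{12},K-i)$ with $\mathbb{P}(a,b)=\prod_{i=0}^{b-1}(1-q^{i-a})$ and $\mathbb{P}_r(a,b)=q^{-a(b-r)}\prod_{i=0}^{r-1}\frac{q^{b-i}-1}{q^{r-i}-1}\prod_{i=0}^{r-1}(1-q^{i-a})$.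
   Context: $\mathbb{P}(a,b)$ (resp. $\mathbb{P}_r(a,b)$) is the probability that an $a\times b$ matrix with i.i.d. uniform entries from $\mathbb{F}_q$ has rank $b$ (resp. $r$). In the sum, $m$ is the number of source packets received by R, $m_{\mathrm D}$ the number received by D from S, $m_{\mathrm{RD}}$ the number received by both, and $m'$ the number of recoded packets D receives from R. *)

From HB Require Import structures.
From mathcomp Require Import all_boot all_order all_algebra.
Set Implicit Arguments. Unset Strict Implicit. Unset Printing Implicit Defensive.
Import Order.TTheory GRing.Theory Num.Theory.
Local Open Scope ring_scope.

Section Defs.
Variable R : realFieldType.

Definition unif_avg (T : finType) (f : T -> R) : R :=
  (#|T|%:R)^-1 * \sum_(x : T) f x.

Definition erasure_wt (eps : R) (n : nat) (S : {set 'I_n}) : R :=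
  (1 - eps) ^+ #|S| * eps ^+ (n - #|S|).

Definition rows_of (F : fieldType) (n K : nat) (S : {set 'I_n})
    (C : 'M[F]_(n, K)) : 'M[F]_(#|S|, K) :=
  rowsub (fun i : 'I_#|S| => enum_val i) C.

(* Decoding success probability P_R^(1) of the single-relay model:
   C : source coefficient matrix (N_S rows, i.i.d. uniform in F^K),
   A : packets received by R, D : packets received by D from S,
   E : recoded packets received by D from R, G : relay recoding matrix
   (N_R x #|A|, i.i.d. uniform). *)
Definition P1R (F : finFieldType) (K NS NR : nat) (eSD eSR eRD : R) : R :=
  unif_avg (fun C : 'M[F]_(NS, K) =>
    \sum_(A : {set 'I_NS}) \sum_(D : {set 'I_NS}) \sum_(E : {set 'I_NR})
      erasure_wt eSR A * erasure_wt eSD D * erasure_wt eRD E *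
      unif_avg (fun G : 'M[F]_(NR, #|A|) =>
        ((\rank (col_mx (rows_of D C) (rows_of E (G *m rows_of A C))) == K
          :> nat)%:R))).

Definition Pfull (q : R) (a b : nat) : R :=
  \prod_(0 <= i < b) (1 - q ^ (i%:Z - a%:Z)).

Definition Prank (q : R) (r a b : nat) : R :=
  q ^ (- (a%:Z * (b%:Z - r%:Z))) *
  (\prod_(0 <= i < r) ((q ^ (b%:Z - i%:Z) - 1) / (q ^ (r%:Z - i%:Z) - 1))) *
  \prod_(0 <= i < r) (1 - q ^ (i%:Z - a%:Z)).

(* P^(2)(m1,m2,m12;K); the lower bound (K + m12) - m1 etc. in truncated nat
   subtraction equals max(0, K - m1 + m12). *)
Definition P2 (q : R) (m1 m2 m12 K : nat) : R :=
  \sum_(maxn (K + m12 - m1) (K + m12 - m2) <= i < (minn m12 K).+1)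
    Prank q i m12 K * Pfull q (m1 - m12) (K - i) * Pfull q (m2 - m12) (K - i).

Definition Bin (k N : nat) (eps : R) : R :=
  'C(N, k)%:R * (1 - eps) ^+ k * eps ^+ (N - k).

Definition alpha (NS : nat) (eSR eSD : R) (m mD mRD : nat) : R :=
  'C(NS, mRD)%:R * 'C(NS - mRD, m - mRD)%:R * 'C(NS - m, mD - mRD)%:R *
  (1 - eSR) ^+ m * eSR ^+ (NS - m) * (1 - eSD) ^+ mD * eSD ^+ (NS - mD).

(* Right-hand side; nat truncated subtractions in the lower bounds encode
   max(0, m + mD - NS) and max(0, K - mD). *)
Definition P1R_formula (q : R) (K NS NR : nat) (eSD eSR eRD : R) : R :=
  \sum_(m < NS.+1) \sum_(mD < NS.+1 | (K <= m + mD)%N)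
    \sum_(m + mD - NS <= mRD < (minn m mD).+1)
      alpha NS eSR eSD m mD mRD *
      \sum_(K - mD <= m' < NR.+1)
        Bin m' NR eRD * P2 q (m' + mD) (m - mRD + mD) mD K.

End Defs.

From HB Require Import structures.
From mathcomp Require Import all_boot all_order all_algebra.
From mathcomp Require Import ring zify.
Set Implicit Arguments. Unset Strict Implicit. Unset Printing Implicit Defensive.
Import Order.TTheory GRing.Theory Num.Theory.
Local Open Scope ring_scope.

(* Fix the erasure patterns: the set A of source packets received by R, the
   set D of those received by D, and the set E of recoded packets received by D.
   Then D decodes iff [C_D; G_E C_A] has rank K, where C_S and G_E are the rows
   of C and G indexed by S and E.  As G_E is uniform, D receives |E| uniform
   combinations of the rows of C_A, and m such combinations complete a matrix X
   to rank K with probability [rank [X; C_A] = K] * P(m, K - rank X).  Moreover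
   rank [C_D; C_A] = rank [C_D; C_(A\D)], where C_D and C_(A\D) are independent
   uniform matrices; conditioning on rank C_D = i, which has probability
   P_i(|D|, K), gives the summand P_i(|D|, K) P(|E|, K - i) P(|A\D|, K - i) of
   P^(2).  The result depends only on |A|, |D|, |A :&: D| and |E|, and counting
   the erasure patterns of given sizes yields alpha and B. *)

Section FiniteSums.
Variable R : pzSemiRingType.

Lemma sumr_bool (T : finType) (P : pred T) (g : bool -> R) :
  \sum_(x : T) g (P x) = #|P|%:R * g true + (#|T| - #|P|)%N%:R * g false.
Proof.
rewrite (bigID P) /= (eq_bigr (fun=> g true)); last by move=> x ->.
rewrite [X in _ + X](eq_bigr (fun=> g false)); last by move=> x /negPf ->.
by rewrite !sumr_const -[#|T|](cardC P) addKn !mulr_natl.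
Qed.

Lemma sumr_indicator (T : finType) (P : pred T) :
  \sum_(x : T) ((P x)%:R : R) = #|P|%:R.
Proof. by rewrite (sumr_bool P (fun b => b%:R)) mulr1 mulr0 addr0. Qed.

Lemma sum_fibers (T V : finType) (s : T -> V) (G : V -> R) :
  \sum_(x : T) G (s x) = \sum_(v : V) #|[pred x | s x == v]|%:R * G v.
Proof.
rewrite (partition_big s xpredT) //=; apply: eq_bigr => v _.
by rewrite mulr_natl -sumr_const; apply: eq_big => [x|x /eqP <-].
Qed.

Lemma sum_nat_fibers (T : finType) n (s : T -> nat) (G : nat -> R) :
  (forall x, s x < n)%N ->
  \sum_(x : T) G (s x) = \sum_(i < n) #|[pred x | s x == i]|%:R * G i.
Proof.
move=> lt_s_n; rewrite (sum_fibers (fun x => Ordinal (lt_s_n x)) (fun i => G i)).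
by apply: eq_bigr => i _; congr (_%:R * _).
Qed.

Lemma sum_col_mx (T : finType) m1 m2 n (f : 'M[T]_(m1 + m2, n) -> R) :
  \sum_(Z : 'M[T]_(m1 + m2, n)) f Z =
  \sum_(X : 'M[T]_(m1, n)) \sum_(Y : 'M[T]_(m2, n)) f (col_mx X Y).
Proof.
rewrite pair_big (reindex (fun XY => col_mx XY.1 XY.2)) //=.
exists (fun Z => (usubmx Z, dsubmx Z)) => [[X Y] _ | Z _] /=.
  by rewrite col_mxKu col_mxKd.
by rewrite vsubmxK.
Qed.

Lemma big_nat_restrict n lo hi (G : nat -> R) : (hi <= n)%N ->
  (forall i, (i < n)%N -> ~~ (lo <= i < hi)%N -> G i = 0) ->
  \sum_(0 <= i < n) G i = \sum_(lo <= i < hi) G i.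
Proof.
move=> le_hi_n G0; rewrite [RHS](@big_nat_widenl _ _ _ lo 0) //.
rewrite [RHS](big_nat_widen _ _ _ _ _ le_hi_n).
rewrite [LHS](bigID (fun i => lo <= i < hi)%N) /= [X in _ + X]big1_seq ?addr0.
  by apply: eq_bigl => i.
by move=> i /andP[out_i]; rewrite mem_index_iota => /andP[_ lt_in]; apply: G0.
Qed.

End FiniteSums.

Section GaussianFactors.
Variables (R : realFieldType) (q : R).

Lemma Pfull0 s : Pfull q s 0 = 1.
Proof. by rewrite /Pfull big_geq. Qed.

Lemma Pfull_small s k : (s < k)%N -> Pfull q s k = 0.
Proof.
move=> lt_sk; rewrite /Pfull (big_cat_nat (n := s)) ?(ltnW lt_sk) //=.
by rewrite [X in _ * X]big_ltn // subrr expr0z subrr mul0r mulr0.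
Qed.

Lemma Pfull_recr s k : Pfull q s k.+1 = Pfull q s k * (1 - q ^ (k%:Z - s%:Z)).
Proof. by rewrite /Pfull big_nat_recr. Qed.

Lemma Pfull_recl s k : Pfull q s.+1 k.+1 = (1 - q ^ (- s.+1%:Z)) * Pfull q s k.
Proof.
rewrite /Pfull big_nat_recl // sub0r; congr (_ * _).
by apply: eq_big_nat => i _; congr (1 - q ^ _); lia.
Qed.

Lemma Prank00 K : Prank q 0 0 K = 1.
Proof. by rewrite /Prank !big_geq // mul0r oppr0 expr0z !mulr1. Qed.

Lemma Prank_small0 K r : Prank q r.+1 0 K = 0.
Proof. by rewrite /Prank -/(Pfull q 0 r.+1) Pfull_small ?mulr0. Qed.

Lemma Prank_gt K r n : (K < r)%N -> Prank q r n K = 0.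
Proof.
move=> lt_Kr; rewrite /Prank (big_cat_nat (n := K)) ?(ltnW lt_Kr) //=.
by rewrite [X in _ * (_ * X) * _]big_ltn // subrr expr0z subrr !(mul0r, mulr0).
Qed.

Lemma P2_eq0 m1 m2 m12 K :
  (minn m12 K < maxn (K + m12 - m1) (K + m12 - m2))%N -> P2 q m1 m2 m12 K = 0.
Proof. by move=> lt_range; rewrite /P2 big_geq. Qed.

Lemma P2E d e b K :
  \sum_(i < d.+1) Prank q i d K * Pfull q e (K - i) * Pfull q b (K - i) =
  P2 q (e + d) (b + d) d K.
Proof.
rewrite /P2 !addnK -(big_mkord xpredT
  (fun i => Prank q i d K * Pfull q e (K - i) * Pfull q b (K - i))).
apply: big_nat_restrict => [|i lt_id]; first by rewrite ltnS geq_minl.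
have [lt_e|] := ltnP e (K - i); first by rewrite (Pfull_small lt_e) mulr0 mul0r.
have [lt_b|] := ltnP b (K - i); first by rewrite (Pfull_small lt_b) mulr0.
move=> le_b le_e out_i; rewrite Prank_gt ?mul0r //.
by move: out_i; rewrite negb_and -!ltnNge => /orP[]; lia.
Qed.

Hypothesis q_gt1 : 1 < q.

Let q_neq0 : q != 0. Proof. by rewrite gt_eqF // (lt_trans ltr01 q_gt1). Qed.

Lemma expfz_natB (e : int) (a b : nat) :
  e = a%:Z - b%:Z -> q ^ e = q ^+ a / q ^+ b.
Proof. by move=> ->; rewrite expfzDr // -invr_expz. Qed.

(* The recurrences for adding one uniform row: it lies in a given subspace of
   F^K of dimension r with probability q^(r - K). *)
Lemma Pfull_rec s k :
  q ^+ k.+1 * Pfull q s.+1 k.+1 = Pfull q s k.+1 + (q ^+ k.+1 - 1) * Pfull q s k.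
Proof.
rewrite Pfull_recl Pfull_recr (@expfz_natB (k%:Z - s%:Z) k s) //.
rewrite (@expfz_natB (- s.+1%:Z) 0 s.+1) ?sub0r //.
by rewrite !exprS; field; rewrite expf_neq0.
Qed.

Let qbinom K r :=
  \prod_(0 <= i < r) ((q ^ (K%:Z - i%:Z) - 1) / (q ^ (r%:Z - i%:Z) - 1)).

Let PrankE K r n :
  Prank q r n K = q ^ (- (n%:Z * (K%:Z - r%:Z))) * qbinom K r * Pfull q n r.
Proof. by []. Qed.

Let qbinom_recr K r :
  qbinom K r.+1 = qbinom K r * ((q ^+ K / q ^+ r - 1) / (q ^+ r.+1 - 1)).
Proof.
rewrite /qbinom !prodf_div big_nat_recr // big_nat_recl //.
rewrite (@expfz_natB _ K r) // (@expfz_natB _ r.+1 0) // expr0 divr1.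
have -> : \prod_(0 <= i < r) (q ^ (r.+1%:Z - i.+1%:Z) - 1) =
          \prod_(0 <= i < r) (q ^ (r%:Z - i%:Z) - 1).
  by apply: eq_big_nat => i _; congr (q ^ _ - 1); lia.
by rewrite [LHS]/= invfM; ring.
Qed.

Lemma Prank_rec0 K n : q ^+ K * Prank q 0 n.+1 K = Prank q 0 n K.
Proof.
rewrite !PrankE /qbinom !big_geq // !Pfull0 !mulr1.
rewrite (@expfz_natB _ 0 (n.+1 * K)) ?(@expfz_natB _ 0 (n * K)); try lia.
by rewrite mulSn exprD !expr0 !mul1r invfM mulrA divff ?mul1r // expf_neq0.
Qed.

Lemma Prank_rec K n r : q ^+ K * Prank q r.+1 n.+1 K =
  q ^+ r.+1 * Prank q r.+1 n K + (q ^+ K - q ^+ r) * Prank q r n K.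
Proof.
rewrite !PrankE qbinom_recr Pfull_recl Pfull_recr (@expfz_natB (r%:Z - n%:Z) r n) //.
rewrite (@expfz_natB (- n.+1%:Z) 0 n.+1) ?sub0r //.
rewrite (@expfz_natB (- (n.+1%:Z * (K%:Z - r.+1%:Z))) (n.+1 * r.+1) (n.+1 * K));
  last lia.
rewrite (@expfz_natB (- (n%:Z * (K%:Z - r.+1%:Z))) (n * r.+1) (n * K)); last lia.
rewrite (@expfz_natB (- (n%:Z * (K%:Z - r%:Z))) (n * r) (n * K)); last lia.
rewrite !mulSn !mulnS !exprD !exprS expr0.
have qr1 : q * q ^+ r - 1 != 0 by rewrite subr_eq0 -exprS gt_eqF // exprn_egt1.
by field; rewrite qr1 q_neq0 !expf_neq0.
Qed.

End GaussianFactors.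

Section FinFieldRowSpaces.
Variable F : finFieldType.
Local Notation q := #|F|.

Lemma card_rV_submx m n (M : 'M[F]_(m, n)) :
  #|[set v : 'rV[F]_n | (v <= M)%MS]| = (q ^ \rank M)%N.
Proof.
have -> : [set v : 'rV[F]_n | (v <= M)%MS] = [set w *m row_base M | w : 'rV_(\rank M)].
  apply/setP => v; rewrite inE; apply/idP/imsetP => [|[w _ ->]].
    by rewrite -(eq_row_base M) => /submxP[w ->]; exists w.
  by rewrite -(eq_row_base M) submxMl.
rewrite card_imset ?card_mx ?mul1n //; exact: row_free_inj (row_base_free M).
Qed.

Lemma mxrank_col_mxC m1 m2 n (A : 'M[F]_(m1, n)) (B : 'M[F]_(m2, n)) :
  \rank (col_mx A B) = \rank (col_mx B A).
Proof. by rewrite -!addsmxE addsmxC. Qed.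

Lemma mxrank_col_mxA m1 m2 m3 n (A : 'M[F]_(m1, n)) (B : 'M[F]_(m2, n))
    (C : 'M[F]_(m3, n)) :
  \rank (col_mx A (col_mx B C)) = \rank (col_mx (col_mx A B) C).
Proof.
rewrite -!addsmxE -(adds_eqmx (eqmx_refl A) (addsmxE B C)).
by rewrite -(adds_eqmx (addsmxE A B) (eqmx_refl C)) addsmxA.
Qed.

Lemma mxrank_col_mxSl m1 m2 n (A : 'M[F]_(m1, n)) (B : 'M[F]_(m2, n)) :
  (\rank A <= \rank (col_mx A B))%N.
Proof. by rewrite -addsmxE mxrankS // addsmxSl. Qed.

Lemma mxrank_col_mx_leq m1 m2 n (A : 'M[F]_(m1, n)) (B : 'M[F]_(m2, n)) :
  (\rank (col_mx A B) <= \rank A + \rank B)%N.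
Proof. by rewrite -addsmxE; case: (mxrank_adds_leqif A B). Qed.

Lemma mxrank_col_mx_sub m1 m2 m3 n (A : 'M[F]_(m1, n)) (B : 'M[F]_(m2, n))
    (C : 'M[F]_(m3, n)) :
  (B <= C)%MS -> \rank (col_mx (col_mx A B) C) = \rank (col_mx A C).
Proof.
move=> sBC; rewrite -mxrank_col_mxA -!addsmxE.
rewrite -(adds_eqmx (eqmx_refl A) (addsmxE B C)).
by rewrite (adds_eqmx (eqmx_refl A) (addsmx_idPr sBC)).
Qed.

Lemma mxrank_col_mx_rV m n (A : 'M[F]_(m, n)) (v : 'rV[F]_n) :
  \rank (col_mx A v) = (\rank A + ~~ (v <= A)%MS)%N.
Proof.
rewrite -addsmxE; have [le_Av eq_Av] := mxrank_leqif_sup (addsmxSl A v).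
have [le_sum _] := mxrank_adds_leqif A v; have := rank_leq_row v.
move: eq_Av; rewrite addsmx_sub submx_refl /=.
by case: (v <= A)%MS => /= /eqP; lia.
Qed.

Lemma mxrank_mul_cokermx a m n (A : 'M[F]_(m, n)) (B : 'M[F]_(a, n)) :
  \rank (B *m cokermx A) = (\rank (col_mx A B) - \rank A)%N.
Proof.
have kerA : (kermx (cokermx A) :=: A)%MS.
  by apply/eqmxP/andP; rewrite sub_kermx mulmx_coker submxE mulmx_ker.
have := mxrank_mul_ker B (cokermx A); rewrite (cap_eqmx (eqmx_refl B) kerA).
have := mxrank_sum_cap B A; rewrite -addsmxE addsmxC.
by move: (\rank (B *m _)); lia.
Qed.

Lemma card_rV_mul_submx a m n (A : 'M[F]_(m, n)) (B : 'M[F]_(a, n)) :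
  #|[set g : 'rV[F]_a | (g *m B <= A)%MS]| =
  (q ^ (a - (\rank (col_mx A B) - \rank A)))%N.
Proof.
rewrite -mxrank_mul_cokermx -mxrank_ker -card_rV_submx.
by apply: eq_card => g; rewrite !inE sub_kermx mulmxA -submxE.
Qed.

End FinFieldRowSpaces.

Section RankDistribution.
Variables (F : finFieldType) (R : realFieldType).
Local Notation q := (#|F|%:R : R).

Lemma natr_card_gt1 : 1 < q.
Proof. by rewrite ltr1n card_finNzRing_gt1. Qed.

Lemma natr_card_neq0 : q != 0.
Proof. by rewrite gt_eqF // (lt_trans ltr01 natr_card_gt1). Qed.

Lemma sum_mxrank_col_mx_rV n K (X : 'M[F]_(n, K)) (g : nat -> R) :
  \sum_(v : 'rV[F]_K) g (\rank (col_mx v X)) =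
  q ^+ \rank X * g (\rank X) + (q ^+ K - q ^+ \rank X) * g (\rank X).+1.
Proof.
under eq_bigr do rewrite mxrank_col_mxC mxrank_col_mx_rV.
rewrite (sumr_bool (fun v => (v <= X)%MS) (fun b => g (\rank X + ~~ b)%N)).
have -> : #|(fun v : 'rV[F]_K => (v <= X)%MS)| = (#|F| ^ \rank X)%N.
  by rewrite -card_rV_submx; apply: eq_card => v; rewrite inE.
rewrite addn0 addn1 card_mx mul1n natrB ?natrX // leq_exp2l ?rank_leq_col //.
exact: card_finNzRing_gt1.
Qed.

Lemma sum_mxrank_eq n K r :
  \sum_(X : 'M[F]_(n, K)) ((\rank X == r)%:R : R) = q ^+ (n * K) * Prank q r n K.
Proof.
elim: n r => [|n IHn] r.
  rewrite (eq_bigr (fun=> ((0 == r)%:R : R))) => [|X _]; last first.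
    by rewrite flatmx0 mxrank0.
  rewrite sumr_const card_mx mul0n expn0 expr0 mul1r.
  by case: r => [|r]; rewrite ?Prank00 ?Prank_small0.
rewrite (@sum_col_mx _ _ 1 n K) exchange_big /=.
under eq_bigr => X _ do rewrite (sum_mxrank_col_mx_rV X (fun k => (k == r)%:R)).
rewrite big_split /=; case: r => [|r].
  rewrite [X in _ + X]big1 => [|X _]; last by rewrite mulr0.
  rewrite (eq_bigr (fun X => ((\rank X == 0)%:R : R))) => [|X _]; last first.
    by case: eqP => [->|]; rewrite ?expr0 ?mul1r ?mulr0.
  by rewrite addr0 IHn -(Prank_rec0 natr_card_gt1) mulrA -exprD mulSn addnC.
rewrite (eq_bigr (fun X => q ^+ r.+1 * ((\rank X == r.+1)%:R : R))) => [|X _];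
  last by case: eqP => [->|]; rewrite ?mulr0.
rewrite [X in _ + X](eq_bigr (fun X => (q ^+ K - q ^+ r) * ((\rank X == r)%:R : R)));
  last by move=> X _; rewrite eqSS; case: eqP => [->|]; rewrite ?mulr0.
rewrite -!mulr_sumr !IHn mulSn addnC exprD -mulrA (Prank_rec natr_card_gt1).
by rewrite mulrDr !mulrA ![_ * q ^+ (n * K)]mulrC.
Qed.

Lemma sum_mxrank d K (g : nat -> R) :
  \sum_(X : 'M[F]_(d, K)) g (\rank X) =
  q ^+ (d * K) * \sum_(i < d.+1) Prank q i d K * g i.
Proof.
rewrite (sum_nat_fibers _ (fun X => rank_leq_row X : \rank X < d.+1)%N) mulr_sumr.
apply: eq_bigr => i _; rewrite -sumr_indicator sum_mxrank_eq mulrA.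
by congr (_ * _); apply: eq_bigr => X _.
Qed.

End RankDistribution.

Section RandomCombinations.
Variables (F : finFieldType) (R : realFieldType).
Local Notation q := (#|F|%:R : R).

Lemma sum_rV_mul_submx a m n (A : 'M[F]_(m, n)) (B : 'M[F]_(a, n)) (h : bool -> R) :
  let d := (\rank (col_mx A B) - \rank A)%N in
  \sum_(g : 'rV[F]_a) h (g *m B <= A)%MS =
  q ^+ (a - d) * h true + (q ^+ a - q ^+ (a - d)) * h false.
Proof.
rewrite (sumr_bool (fun g => (g *m B <= A)%MS)).
have -> : #|(fun g : 'rV[F]_a => (g *m B <= A)%MS)| =
          (#|F| ^ (a - (\rank (col_mx A B) - \rank A)))%N.
  by rewrite -card_rV_mul_submx; apply: eq_card => g; rewrite inE.
rewrite card_mx mul1n natrB ?natrX // leq_exp2l ?leq_subr //.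
exact: card_finNzRing_gt1.
Qed.

Lemma sum_full_rank_col_mx_mul K a m n (X : 'M[F]_(n, K)) (Y : 'M[F]_(a, K)) :
  \sum_(G : 'M[F]_(m, a)) ((\rank (col_mx X (G *m Y)) == K)%:R : R) =
  q ^+ (m * a) * ((\rank (col_mx X Y) == K)%:R * Pfull q m (K - \rank X)).
Proof.
elim: m n X => [|m IHm] n X.
  rewrite (eq_bigr (fun=> ((\rank X == K)%:R : R))) => [|G _]; last first.
    by rewrite flatmx0 rank_col_mx0.
  rewrite sumr_const card_mx mul0n expn0 expr0 mulr1n mul1r.
  have [lt_XK|le_KX] := ltnP (\rank X) K.
    by rewrite Pfull_small ?mulr0 ?subn_gt0 // ltn_eqF.
  have rXK : \rank X = K by apply/eqP; rewrite eqn_leq rank_leq_col.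
  rewrite rXK subnn Pfull0 eqxx mulr1.
  by apply/esym/eqP; rewrite eqn_leq rank_leq_col -{1}rXK mxrank_col_mxSl.
rewrite (@sum_col_mx _ _ 1 m a) /=.
under eq_bigr => g _.
  under eq_bigr => G _ do rewrite (mul_col_mx (m1 := 1)) (@mxrank_col_mxA _ n 1 m).
  rewrite IHm mxrank_col_mx_sub ?submxMl // mxrank_col_mx_rV.
  over.
rewrite /= (sum_rV_mul_submx X Y (fun b => q ^+ (m * a) *
  ((\rank (col_mx X Y) == K)%:R * Pfull q m (K - (\rank X + ~~ b))))) /=.
have [rXY|_] := eqVneq (\rank (col_mx X Y)) K; last by rewrite !mul0r !mulr0 addr0.
rewrite rXY !mul1r addn0 addn1.
have le_XK : (\rank X <= K)%N by rewrite rank_leq_col.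
case eK: (K - \rank X)%N => [|k].
  by rewrite subn0 subrr mul0r addr0 !Pfull0 !mulr1 mulSn exprD.
have -> : (K - (\rank X).+1)%N = k by lia.
have le_ka : (k.+1 <= a)%N.
  by have := mxrank_col_mx_leq X Y; have := rank_leq_row Y; lia.
have split_qa : q ^+ a = q ^+ (a - k.+1) * q ^+ k.+1 by rewrite -exprD subnK.
rewrite mulSn exprD split_qa.
transitivity (q ^+ (a - k.+1) * q ^+ (m * a) * (q ^+ k.+1 * Pfull q m.+1 k.+1)).
  by rewrite (Pfull_rec (natr_card_gt1 F R)); ring.
by ring.
Qed.

Lemma sum_full_rank_col_mx K b n (X : 'M[F]_(n, K)) :
  \sum_(Y : 'M[F]_(b, K)) ((\rank (col_mx X Y) == K)%:R : R) =
  q ^+ (b * K) * Pfull q b (K - \rank X).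
Proof.
rewrite (eq_bigr (fun Y => ((\rank (col_mx X (Y *m 1%:M)) == K)%:R : R)));
  last by move=> Y _; rewrite mulmx1.
have rank_X1 : \rank (col_mx X 1%:M) = K.
  apply/eqP; rewrite eqn_leq rank_leq_col -{1}(mxrank1 F K).
  by rewrite mxrank_col_mxC mxrank_col_mxSl.
by rewrite sum_full_rank_col_mx_mul rank_X1 eqxx mul1r.
Qed.

End RandomCombinations.

Section UniformRows.
Variables (F : finFieldType) (R : realFieldType).
Local Notation q := (#|F|%:R : R).

(* The fibers of C |-> S C are translates of its kernel by a right inverse of
   S; comparing with the total count gives their common size. *)
Lemma card_mulmx_fiber p N k (S : 'M[F]_(p, N)) (Z : 'M[F]_(p, k)) :
  row_free S -> #|[pred C : 'M[F]_(N, k) | S *m C == Z]| = (#|F| ^ ((N - p) * k))%N.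
Proof.
move=> freeS; have [T ST] := row_freeP freeS.
pose ker := [set C : 'M[F]_(N, k) | S *m C == 0].
have card_fiber Z' : #|[pred C : 'M[F]_(N, k) | S *m C == Z']| = #|ker|.
  rewrite -[RHS](card_imset _ (addIr (T *m Z'))); apply: eq_card => C; rewrite !inE.
  apply/eqP/imsetP => [SCZ | [C0 ker_C0 ->]]; last first.
    by move: ker_C0; rewrite inE mulmxDr mulmxA ST mul1mx => /eqP->; rewrite add0r.
  exists (C - T *m Z'); last by rewrite subrK.
  by rewrite inE mulmxBr mulmxA ST mul1mx SCZ subrr.
have le_pN : (p <= N)%N by rewrite -(eqP freeS) rank_leq_col.
have card_M : #|{: 'M[F]_(N, k)}| = (#|{: 'M[F]_(p, k)}| * #|ker|)%N.
  rewrite -[LHS]sum1_card (partition_big (fun C => S *m C) xpredT) //= -sum_nat_const.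
  apply: eq_bigr => Z' _; rewrite -(card_fiber Z') -sum1_card.
  by apply: eq_bigl => C; rewrite inE.
move: card_M; rewrite card_fiber !card_mx -[N in (_ ^ (N * k))%N](subnK le_pN).
rewrite mulnDl expnD mulnC => /eqP.
by rewrite eqn_pmul2l ?expn_gt0 ?(ltnW (card_finNzRing_gt1 F)) // => /eqP <-.
Qed.

Lemma sum_mulmx_row_free p N k (S : 'M[F]_(p, N)) (f : 'M[F]_(p, k) -> R) :
  row_free S ->
  \sum_(C : 'M[F]_(N, k)) f (S *m C) = q ^+ ((N - p) * k) * \sum_(Z : 'M[F]_(p, k)) f Z.
Proof.
move=> freeS; rewrite sum_fibers mulr_sumr; apply: eq_bigr => Z _.
by rewrite card_mulmx_fiber // natrX.
Qed.

Lemma rowsub1_mul_tr m1 m2 N (f : 'I_m1 -> 'I_N) (g : 'I_m2 -> 'I_N) :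
  rowsub f 1%:M *m (rowsub g 1%:M)^T = \matrix_(i, j) ((f i == g j)%:R : F).
Proof.
by rewrite trmx_mxsub trmx1 -mxsub_mul mul1mx; apply/matrixP => i j; rewrite !mxE.
Qed.

Lemma rowsub1_mul_tr_inj m N (f : 'I_m -> 'I_N) :
  injective f -> rowsub f 1%:M *m (rowsub f 1%:M)^T = 1%:M :> 'M[F]_m.
Proof.
move=> inj_f; rewrite rowsub1_mul_tr.
by apply/matrixP => i j; rewrite !mxE (inj_eq inj_f).
Qed.

Lemma rowsub1_mul_tr_eq0 m1 m2 N (f : 'I_m1 -> 'I_N) (g : 'I_m2 -> 'I_N) :
  (forall i j, f i != g j) -> rowsub f 1%:M *m (rowsub g 1%:M)^T = 0 :> 'M[F]_(m1, m2).
Proof.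
move=> fg; rewrite rowsub1_mul_tr.
by apply/matrixP => i j; rewrite !mxE (negPf (fg i j)).
Qed.

Lemma row_free_rowsub1 m N (f : 'I_m -> 'I_N) :
  injective f -> row_free (rowsub f 1%:M : 'M[F]_(m, N)).
Proof.
by move=> inj_f; apply/row_freeP; exists (rowsub f 1%:M)^T; apply: rowsub1_mul_tr_inj.
Qed.

Lemma row_free_col_mx_rowsub1 m1 m2 N (f : 'I_m1 -> 'I_N) (g : 'I_m2 -> 'I_N) :
  injective f -> injective g -> (forall i j, f i != g j) ->
  row_free (col_mx (rowsub f 1%:M) (rowsub g 1%:M) : 'M[F]_(m1 + m2, N)).
Proof.
move=> inj_f inj_g fg; apply/row_freeP.
exists (row_mx (rowsub f 1%:M)^T (rowsub g 1%:M)^T).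
rewrite mul_col_row !rowsub1_mul_tr_inj // !rowsub1_mul_tr_eq0 // => [|i j];
  last by rewrite eq_sym.
by rewrite -scalar_mx_block.
Qed.

Lemma rows_ofE N k (S : {set 'I_N}) (C : 'M[F]_(N, k)) :
  rows_of S C = rowsub enum_val 1%:M *m C.
Proof. exact: rowsubE. Qed.

Lemma rows_of_mul N m k (S : {set 'I_N}) (G : 'M[F]_(N, m)) (Y : 'M[F]_(m, k)) :
  rows_of S (G *m Y) = rows_of S G *m Y.
Proof. by rewrite !rows_ofE mulmxA. Qed.

Lemma sum_rows_of N k (S : {set 'I_N}) (f : 'M[F]_(#|S|, k) -> R) :
  \sum_(C : 'M[F]_(N, k)) f (rows_of S C) =
  q ^+ ((N - #|S|) * k) * \sum_(Z : 'M[F]_(#|S|, k)) f Z.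
Proof.
under eq_bigr do rewrite rows_ofE.
exact/sum_mulmx_row_free/row_free_rowsub1/enum_val_inj.
Qed.

Lemma sum_rows_of_disjoint N k (D B : {set 'I_N})
    (f : 'M[F]_(#|D|, k) -> 'M[F]_(#|B|, k) -> R) :
  [disjoint D & B] ->
  \sum_(C : 'M[F]_(N, k)) f (rows_of D C) (rows_of B C) =
  q ^+ ((N - (#|D| + #|B|)) * k) *
    \sum_(X : 'M[F]_(#|D|, k)) \sum_(Y : 'M[F]_(#|B|, k)) f X Y.
Proof.
move=> dis_DB; pose f' (Z : 'M[F]_(#|D| + #|B|, k)) := f (usubmx Z) (dsubmx Z).
pose S : 'M[F]_(#|D| + #|B|, N) := col_mx (rowsub enum_val 1%:M) (rowsub enum_val 1%:M).
rewrite (eq_bigr (fun C => f' (S *m C))); last first.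
  by move=> C _; rewrite /f' mul_col_mx col_mxKu col_mxKd -!rows_ofE.
rewrite sum_mulmx_row_free ?sum_col_mx.
  by under eq_bigr do under eq_bigr do rewrite /f' col_mxKu col_mxKd.
apply: row_free_col_mx_rowsub1; try exact: enum_val_inj.
move=> i j; apply: contraTneq (enum_valP i) => ->.
by rewrite (disjointFl dis_DB (enum_valP j)).
Qed.

End UniformRows.

Section ConditionalSuccess.
Variables (F : finFieldType) (R : realFieldType).
Local Notation q := (#|F|%:R : R).

Lemma row_sub_rows_of N k (S : {set 'I_N}) (C : 'M[F]_(N, k)) i :
  i \in S -> (row i C <= rows_of S C)%MS.
Proof. by move=> iS; rewrite -(enum_rankK_in iS iS) -row_rowsub row_sub. Qed.

Lemma mxrank_rows_of_setD N k (A D : {set 'I_N}) (C : 'M[F]_(N, k)) :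
  \rank (col_mx (rows_of D C) (rows_of A C)) =
  \rank (col_mx (rows_of D C) (rows_of (A :\: D) C)).
Proof.
have sub_l m1 m2 m3 (M : 'M[F]_(m1, k)) (P : 'M[F]_(m2, k)) (Q : 'M[F]_(m3, k)) :
    (M <= P)%MS -> (M <= col_mx P Q)%MS.
  by move=> sMP; rewrite -addsmxE (submx_trans sMP) ?addsmxSl.
have sub_r m1 m2 m3 (M : 'M[F]_(m1, k)) (P : 'M[F]_(m2, k)) (Q : 'M[F]_(m3, k)) :
    (M <= Q)%MS -> (M <= col_mx P Q)%MS.
  by move=> sMQ; rewrite -addsmxE (submx_trans sMQ) ?addsmxSr.
apply/eqmx_rank/andP; split; rewrite col_mx_sub sub_l ?submx_refl //=;
  apply/row_subP => j; rewrite row_rowsub; have := enum_valP j.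
- case: (boolP (enum_val j \in D)) => [jD _ | jD jA].
    exact/sub_l/row_sub_rows_of.
  by apply/sub_r/row_sub_rows_of; rewrite inE jD.
- by rewrite inE => /andP[_ jA]; apply/sub_r/row_sub_rows_of.
Qed.

Lemma avg_relay_full_rank K NS NR (A D : {set 'I_NS}) (E : {set 'I_NR})
    (C : 'M[F]_(NS, K)) :
  unif_avg (fun G : 'M[F]_(NR, #|A|) =>
    ((\rank (col_mx (rows_of D C) (rows_of E (G *m rows_of A C))) == K)%:R : R)) =
  (\rank (col_mx (rows_of D C) (rows_of A C)) == K)%:R *
    Pfull q #|E| (K - \rank (rows_of D C)).
Proof.
rewrite /unif_avg card_mx; under eq_bigr do rewrite rows_of_mul.
rewrite (sum_rows_of (fun Z =>
  ((\rank (col_mx (rows_of D C) (Z *m rows_of A C)) == K)%:R : R))).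
rewrite sum_full_rank_col_mx_mul mulrA -exprD -mulnDl subnK; last first.
  by rewrite -[X in (_ <= X)%N]card_ord max_card.
by rewrite natrX mulKf // expf_neq0 // natr_card_neq0.
Qed.

Lemma avg_full_rank K NS NR (A D : {set 'I_NS}) (E : {set 'I_NR}) :
  unif_avg (fun C : 'M[F]_(NS, K) => unif_avg (fun G : 'M[F]_(NR, #|A|) =>
    ((\rank (col_mx (rows_of D C) (rows_of E (G *m rows_of A C))) == K)%:R : R))) =
  P2 q (#|E| + #|D|) (#|A| - #|A :&: D| + #|D|) #|D| K.
Proof.
set B := A :\: D; have dis_DB : [disjoint D & B].
  by rewrite disjoints_subset; apply/subsetP => x xD; rewrite !inE xD.
have le_DB : (#|D| + #|B| <= NS)%N.
  rewrite -cardsUI disjoint_setI0 // cards0 addn0.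
  by rewrite -[X in (_ <= X)%N]card_ord max_card.
rewrite {1}/unif_avg.
under eq_bigr do rewrite avg_relay_full_rank mxrank_rows_of_setD.
rewrite (sum_rows_of_disjoint (fun X Y =>
  ((\rank (col_mx X Y) == K)%:R : R) * Pfull q #|E| (K - \rank X)) dis_DB).
under eq_bigr do rewrite -mulr_suml sum_full_rank_col_mx mulrC.
rewrite (@sum_mxrank F R _ _ (fun i =>
  Pfull q #|E| (K - i) * (q ^+ (#|B| * K) * Pfull q #|B| (K - i)))).
rewrite -cardsD -/B -P2E card_mx !mulr_sumr; apply: eq_bigr => i _.
have -> : (#|F| ^ (NS * K))%:R =
    q ^+ ((NS - (#|D| + #|B|)) * K) * q ^+ (#|D| * K) * q ^+ (#|B| * K).
  by rewrite natrX -!exprD -!mulnDl -addnA subnK.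
by field; rewrite !expf_neq0 // natr_card_neq0.
Qed.

End ConditionalSuccess.

Lemma bin_trinomial N m k : (k <= m)%N -> (m <= N)%N ->
  ('C(N, m) * 'C(m, k) = 'C(N, k) * 'C(N - k, m - k))%N.
Proof.
move=> le_km le_mN; have le_kN := leq_trans le_km le_mN.
have le_mk_Nk : (m - k <= N - k)%N by lia.
have := bin_fact le_mk_Nk; rewrite (_ : N - k - (m - k) = N - m)%N; last by lia.
move=> factNk; apply/eqP; rewrite -(@eqn_pmul2r (k`! * (m - k)`! * (N - m)`!));
  last by rewrite !muln_gt0 !fact_gt0.
apply/eqP; transitivity N`!.
  by rewrite -(bin_fact le_mN) -(bin_fact le_km); ring.
by rewrite -(bin_fact le_kN) -factNk; ring.
Qed.

Section Subsets.
Variables (T : finType) (R : pzSemiRingType).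
Local Notation N := #|T|.

Lemma card_meet_sets (A : {set T}) mD k : (k <= mD)%N ->
  #|[set D : {set T} | (#|D| == mD) && (#|A :&: D| == k)]| =
  ('C(#|A|, k) * 'C(N - #|A|, mD - k))%N.
Proof.
move=> le_k_mD; pose split_A D := (A :&: D, D :\: A).
have split_inj : injective split_A.
  by move=> D D' [eqI eqD]; rewrite -(setID D A) -(setID D' A) !(setIC _ A) eqI eqD.
rewrite -(card_imset _ split_inj) -(cardsC A) addKn -!cards_draws -cardsX.
apply: eq_card => -[D1 D2]; rewrite !inE /=.
apply/imsetP/and3P => [[D]|[/andP[sD1A /eqP cardD1] sD2CA /eqP cardD2]].
  rewrite inE => /andP[/eqP cardD /eqP cardAD] [-> ->].
  by rewrite subsetIl cardAD eqxx setDE subsetIr -setDE cardsD setIC cardAD cardD.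
have disD2A : [disjoint D2 & A] by rewrite disjoints_subset.
have D1D2_0 : D1 :&: D2 = set0.
  by apply/disjoint_setI0; rewrite disjoint_sym (disjointWr sD1A).
have AD_D1 : A :&: (D1 :|: D2) = D1.
  by rewrite setIUr (setIidPr sD1A) setIC (disjoint_setI0 disD2A) setU0.
have D1A_0 : D1 :\: A = set0 by apply/eqP; rewrite setD_eq0.
exists (D1 :|: D2).
  by rewrite inE cardsU D1D2_0 cards0 subn0 cardD1 cardD2 subnKC // AD_D1 cardD1 !eqxx.
by rewrite /split_A AD_D1 setDUl (setDidPl disD2A) D1A_0 set0U.
Qed.

Lemma sum_set_card (f : nat -> R) :
  \sum_(E : {set T}) f #|E| = \sum_(k < N.+1) 'C(N, k)%:R * f k.
Proof.
rewrite (sum_nat_fibers _ (fun E : {set T} => max_card E : #|E| < N.+1)%N).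
apply: eq_bigr => k _; rewrite -card_draws; congr (_%:R * _).
by apply: eq_card => E; rewrite !inE.
Qed.

Lemma sum_meet_sets (A : {set T}) (G : nat -> nat -> R) :
  \sum_(D : {set T}) G #|D| #|A :&: D| =
  \sum_(mD < N.+1) \sum_(k < mD.+1) ('C(#|A|, k) * 'C(N - #|A|, mD - k))%:R * G mD k.
Proof.
pose c mD k := #|[set D : {set T} | (#|D| == mD) && (#|A :&: D| == k)]|.
have lt_card (D : {set T}) : (#|D| < N.+1)%N := max_card D.
pose s D := (Ordinal (lt_card D), Ordinal (lt_card (A :&: D))).
rewrite (sum_fibers s (fun v => G v.1 v.2)).
rewrite (eq_bigr (fun v : 'I_N.+1 * 'I_N.+1 => (c v.1 v.2)%:R * G v.1 v.2)); last first.
  case=> i j _; congr (_%:R * _).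
  by apply: eq_card => D; rewrite !inE xpair_eqE -!val_eqE.
rewrite -(pair_bigA _ (fun i j : 'I_N.+1 => (c i j)%:R * G i j)).
apply: eq_bigr => mD _; rewrite -(big_mkord xpredT (fun k => (c mD k)%:R * G mD k)).
rewrite -(big_mkord xpredT (fun k => ('C(#|A|, k) * 'C(N - #|A|, mD - k))%:R * G mD k)).
rewrite (@big_nat_restrict _ _ 0 mD.+1 _ (ltn_ord mD)) => [|k _ /=]; last first.
  rewrite ltnNge => /negPn lt_mD_k; suff -> : c mD k = 0%N by rewrite mul0r.
  apply/eqP; rewrite cards_eq0; apply/eqP/setP => D; rewrite !inE.
  apply/negbTE/andP => -[/eqP cardD /eqP cardAD].
  by have := subset_leq_card (subsetIr A D); rewrite cardD cardAD leqNgt lt_mD_k.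
by apply: eq_big_nat => k /andP[_ lt_k]; rewrite /c card_meet_sets.
Qed.

Lemma sum_set_pairs (G : nat -> nat -> nat -> R) :
  \sum_(A : {set T}) \sum_(D : {set T}) G #|A| #|D| #|A :&: D| =
  \sum_(m < N.+1) \sum_(mD < N.+1) \sum_(m + mD - N <= k < (minn m mD).+1)
    ('C(N, k) * 'C(N - k, m - k) * 'C(N - m, mD - k))%:R * G m mD k.
Proof.
under eq_bigr => A _ do rewrite (sum_meet_sets A (G #|A|)).
rewrite (sum_set_card (fun m => \sum_(mD < N.+1) \sum_(k < mD.+1)
  ('C(m, k) * 'C(N - m, mD - k))%:R * G m mD k)).
apply: eq_bigr => m _; rewrite mulr_sumr; apply: eq_bigr => mD _.
have le_mN : (m <= N)%N by rewrite -ltnS.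
rewrite mulr_sumr -(big_mkord xpredT (fun k =>
  'C(N, m)%:R * (('C(m, k) * 'C(N - m, mD - k))%:R * G m mD k))).
have le_hi : ((minn m mD).+1 <= mD.+1)%N by rewrite ltnS geq_minr.
rewrite (@big_nat_restrict _ _ (m + mD - N) _ _ le_hi) => [|k lt_k_mD]; last first.
  rewrite negb_and -!ltnNge => /orP[lt_k|lt_min_k].
    by rewrite (@bin_small (N - m)) ?muln0 ?mul0r ?mulr0 //; lia.
  by rewrite (@bin_small m) ?mul0n ?mul0r ?mulr0 //; lia.
apply: eq_big_nat => k /andP[_]; rewrite ltnS leq_min => /andP[le_km _].
by rewrite mulrA -natrM mulnA bin_trinomial.
Qed.

End Subsets.

Section SuccessProbability.
Variable R : realFieldType.

Lemma unif_avg_sum (T I : finType) (f : I -> T -> R) :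
  unif_avg (fun x => \sum_i f i x) = \sum_i unif_avg (f i).
Proof. by rewrite /unif_avg exchange_big mulr_sumr. Qed.

Lemma unif_avgZl (T : finType) (c : R) (f : T -> R) :
  unif_avg (fun x => c * f x) = c * unif_avg f.
Proof. by rewrite /unif_avg -mulr_sumr mulrCA. Qed.

Lemma P1RE (F : finFieldType) K NS NR (eSD eSR eRD : R) :
  P1R F K NS NR eSD eSR eRD =
  \sum_(A : {set 'I_NS}) \sum_(D : {set 'I_NS}) \sum_(E : {set 'I_NR})
    erasure_wt eSR A * erasure_wt eSD D * erasure_wt eRD E *
    P2 (#|F|%:R : R) (#|E| + #|D|) (#|A| - #|A :&: D| + #|D|) #|D| K.
Proof.
rewrite /P1R unif_avg_sum; apply: eq_bigr => A _; rewrite unif_avg_sum.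
apply: eq_bigr => D _; rewrite unif_avg_sum; apply: eq_bigr => E _.
by rewrite unif_avgZl avg_full_rank.
Qed.

Lemma sum_erasure_wt N (eps c : R) (f : nat -> R) :
  \sum_(E : {set 'I_N}) c * erasure_wt eps E * f #|E| =
  c * \sum_(k < N.+1) Bin k N eps * f k.
Proof.
under eq_bigr do rewrite -mulrA.
rewrite -mulr_sumr.
rewrite (@sum_set_card 'I_N _ (fun k => (1 - eps) ^+ k * eps ^+ (N - k) * f k)).
rewrite card_ord.
by congr (_ * _); apply: eq_bigr => k _; rewrite /Bin !mulrA.
Qed.

Lemma P1R_formulaE (q : R) K NS NR (eSD eSR eRD : R) :
  P1R_formula q K NS NR eSD eSR eRD =
  \sum_(m < NS.+1) \sum_(mD < NS.+1) \sum_(m + mD - NS <= k < (minn m mD).+1)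
    alpha NS eSR eSD m mD k *
      \sum_(m' < NR.+1) Bin m' NR eRD * P2 q (m' + mD) (m - k + mD) mD K.
Proof.
apply: eq_bigr => m _; rewrite [RHS](bigID (fun mD : 'I_NS.+1 => K <= m + mD)%N) /=.
rewrite [X in _ + X]big1 ?addr0 => [|mD lt_K]; last first.
  rewrite big1_seq // => k _; rewrite big1 ?mulr0 // => m' _.
  by rewrite P2_eq0 ?mulr0 //; move: lt_K; rewrite -ltnNge; lia.
apply: eq_bigr => mD _; apply: eq_big_nat => k _; congr (_ * _).
rewrite -(big_mkord xpredT (fun m' =>
  Bin m' NR eRD * P2 q (m' + mD) (m - k + mD) mD K)).
apply/esym/big_nat_restrict => // m' lt_m'NR.
rewrite lt_m'NR andbT -ltnNge => lt_m'.
by rewrite P2_eq0 ?mulr0 //; lia.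
Qed.

End SuccessProbability.

Theorem mainTheorem4 (R : realFieldType) (F : finFieldType) (K NS NR : nat)
    (eSD eSR eRD : R) :
  (1 <= K)%N -> (K <= NS)%N -> (1 <= NR)%N ->
  0 <= eSD <= 1 -> 0 <= eSR <= 1 -> 0 <= eRD <= 1 ->
  P1R F K NS NR eSD eSR eRD = P1R_formula (#|F|%:R : R) K NS NR eSD eSR eRD.
Proof.
(* The identity holds for all parameters. *)
move=> _ _ _ _ _ _; set q := (#|F|%:R : R).
rewrite P1RE P1R_formulaE.
under eq_bigr => A _ do under eq_bigr => D _ do rewrite (sum_erasure_wt _ _ _
  (fun e => P2 q (e + #|D|) (#|A| - #|A :&: D| + #|D|) #|D| K)).
pose G m mD k := (1 - eSR) ^+ m * eSR ^+ (NS - m) * ((1 - eSD) ^+ mD * eSD ^+ (NS - mD)) *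
  \sum_(m' < NR.+1) Bin m' NR eRD * P2 q (m' + mD) (m - k + mD) mD K.
rewrite (eq_bigr (fun A : {set 'I_NS} =>
  \sum_(D : {set 'I_NS}) G #|A| #|D| #|A :&: D|)); last first.
  by move=> A _; apply: eq_bigr => D _; rewrite /G /erasure_wt.
rewrite sum_set_pairs card_ord; apply: eq_bigr => m _; apply: eq_bigr => mD _.
by apply: eq_big_nat => k _; rewrite /G /alpha !natrM; ring.
Qed.
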